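(* Let $n=2k+1$ with $k\ge 1$. If $S$ is a strong resolving set of $S_n$, then $|S|\ge n$.
   Context: For $n\ge 3$, $S_n$ is the graph with vertex set $\{a_i,b_i,c_i,d_i : 1\le i\le n\}$ and edge set $\{a_ia_{i+1}, b_ib_{i+1}, c_ic_{i+1}, d_id_{i+1}, a_{i+1}b_i, a_ib_i, b_ic_i, c_id_i : 1\le i\le n\}$, indices taken modulo $n$. $d$ is the graph distance. A vertex $w$ strongly resolves distinct vertices $u,v$ if $d(v,w)=d(v,u)+d(u,w)$ or $d(u,w)=d(u,v)+d(v,w)$. A set $S$ is a strong resolving set if every two distinct vertices are strongly resolved by some vertex of $S$. *)

From mathcomp Require Import all_boot.
Set Implicit Arguments. Unset Strict Implicit. Unset Printing Implicit Defensive.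

Section Dist.
Variable T : finType.
Variable e : rel T.

Fixpoint reach (m : nat) (u : T) : {set T} :=
  match m with
  | 0 => [set u]
  | m'.+1 => reach m' u :|: [set y | [exists x in reach m' u, e x y]]
  end.

(* d(u,v) = least m with v reachable from u in m steps
   (defaults to #|T| if unreachable; S_n is connected). *)
Definition gdist (u v : T) : nat := find (fun m => v \in reach m u) (iota 0 #|T|).

Definition strongly_resolves (w u v : T) : Prop :=
  gdist v w = gdist v u + gdist u w \/ gdist u w = gdist u v + gdist v w.

Definition strong_resolving_set (S : {set T}) : Prop :=
  forall u v : T, u != v -> exists2 w, w \in S & strongly_resolves w u v.
End Dist.

(* The graph S_n: vertex (l, i) with layer l = 0,1,2,3 for a,b,c,d. *)
Definition Sn_vertex (n : nat) := ('I_4 * 'I_n)%type.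

Definition Sn_arc (n : nat) (x y : Sn_vertex n) : bool :=
  let l := val x.1 in let i := val x.2 in
  let l' := val y.1 in let j := val y.2 in
  [|| (l == l') && (j == i.+1 %% n)
    , (l == 1) && (l' == 0) && (j == i.+1 %% n)
    , (l == 0) && (l' == 1) && (j == i)
    , (l == 1) && (l' == 2) && (j == i)
    | (l == 2) && (l' == 3) && (j == i) ].

Definition Sn_adj (n : nat) : rel (Sn_vertex n) :=
  fun x y => Sn_arc x y || Sn_arc y x.

(* For each i, the vertices d_i and a_(i+k+1) of S_(2k+1) are mutually maximally
   distant: they are at distance k+3, and every neighbour of either one is within
   distance k+3 of the other.  In any graph only the two vertices of such a pair
   strongly resolve it, so a strong resolving set meets each of the n pairwise
   disjoint pairs {d_i, a_(i+k+1)}.  The lower bound k+3 comes from the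
   1-Lipschitz function "distance from d_i", the upper bounds from explicit walks
   along the rings. *)

From mathcomp Require Import all_boot zify.
Set Implicit Arguments. Unset Strict Implicit. Unset Printing Implicit Defensive.

Section GraphDistance.
Variables (T : finType) (e : rel T).

Lemma reach_refl m x : x \in reach e m x.
Proof. by elim: m => [|m IHm] /=; rewrite ?set11 // in_setU IHm. Qed.

Lemma reach_succ m x y : y \in reach e m x -> y \in reach e m.+1 x.
Proof. by move=> Hy /=; rewrite in_setU Hy. Qed.

Lemma reach_step m x y z : y \in reach e m x -> e y z -> z \in reach e m.+1 x.
Proof.
move=> Hy eyz /=; rewrite in_setU inE; apply/orP; right.
by apply/existsP; exists y; rewrite Hy eyz.
Qed.

Lemma reach_edge x y : e x y -> y \in reach e 1 x.
Proof. exact: reach_step (reach_refl 0 x). Qed.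

Lemma reach_trans a b x y z :
  y \in reach e a x -> z \in reach e b y -> z \in reach e (a + b) x.
Proof.
move=> Hy; elim: b z => [|b IHb] z /=; first by rewrite addn0 inE => /eqP ->.
rewrite addnS in_setU inE => /orP [/IHb /reach_succ //|].
by case/existsP=> t /andP [/IHb Ht etz]; apply: reach_step Ht etz.
Qed.

Lemma reach_first_step m x y :
  y \in reach e m.+1 x -> y = x \/ exists2 z, e x z & y \in reach e m z.
Proof.
elim: m y => [|m IHm] y.
  rewrite /= in_setU !inE => /orP [/eqP ->|]; first by left.
  case/existsP=> t /andP [+ ety]; rewrite inE => /eqP Etx.
  by right; exists y; rewrite -?Etx ?set11.
rewrite [reach e m.+2 x]/= in_setU inE => /orP [/IHm [->|[z exz Hy]]|].
- by left.
- by right; exists z => //; apply: reach_succ.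
case/existsP=> t /andP [/IHm [Etx|[z exz Ht]] ety].
  by right; exists y; rewrite -?Etx ?reach_refl.
by right; exists z; last exact: reach_step Ht ety.
Qed.

Lemma reach_lipschitz (phi : T -> nat) :
  (forall x y, e x y -> phi y <= (phi x).+1) ->
  forall m x y, y \in reach e m x -> phi y <= phi x + m.
Proof.
move=> phi_lip; elim=> [|m IHm] x y /=; first by rewrite inE addn0 => /eqP ->.
rewrite in_setU inE => /orP [/IHm|]; first lia.
by case/existsP=> t /andP [/IHm Ht /phi_lip ety]; lia.
Qed.

Lemma gdist_le m x y : y \in reach e m x -> gdist e x y <= m.
Proof.
move=> Hy; rewrite /gdist; have [lt_m_T|le_T_m] := ltnP m #|T|.
  rewrite leqNgt; apply/negP => /(before_find 0).
  by rewrite nth_iota // add0n Hy.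
by apply: leq_trans (find_size _ _) _; rewrite size_iota.
Qed.

Lemma gdist_le_card x y : gdist e x y <= #|T|.
Proof. by rewrite /gdist; apply: leq_trans (find_size _ _) _; rewrite size_iota. Qed.

Lemma gdist_reach x y : gdist e x y < #|T| -> y \in reach e (gdist e x y) x.
Proof.
move=> lt_d_T; have found : has (fun m => y \in reach e m x) (iota 0 #|T|).
  by rewrite has_find size_iota.
by have := nth_find 0 found; rewrite nth_iota // add0n.
Qed.

Lemma gdist_eq0 x y : gdist e x y = 0 -> y = x.
Proof.
move=> d0; have /gdist_reach : gdist e x y < #|T|.
  by rewrite d0; apply/card_gt0P; exists x.
by rewrite d0 inE => /eqP.
Qed.

(* The bound on [phi y] covers an unreachable [y], where [gdist] defaults to [#|T|]. *)
Lemma gdist_ge_lipschitz (phi : T -> nat) x y :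
  (forall x y, e x y -> phi y <= (phi x).+1) ->
  phi y <= #|T| -> phi y - phi x <= gdist e x y.
Proof.
move=> phi_lip phi_y; have [/gdist_reach Hy|] := ltnP (gdist e x y) #|T|.
  by have := reach_lipschitz phi_lip Hy; lia.
lia.
Qed.

Definition maximally_distant (v u : T) : Prop :=
  forall x, e u x -> gdist e v x <= gdist e v u.

Lemma geodesic_through_maximally_distant v u w :
  u != v -> maximally_distant v u ->
  gdist e v w = gdist e v u + gdist e u w -> w = u.
Proof.
move=> neq_uv max_u dvw; apply/eqP/negPn/negP => neq_wu.
have dvw_le := gdist_le_card v w.
have dvu_gt0 : 0 < gdist e v u.
  by rewrite lt0n; apply/eqP => /gdist_eq0 Euv; rewrite Euv eqxx in neq_uv.
have duw_gt0 : 0 < gdist e u w.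
  by rewrite lt0n; apply/eqP => /gdist_eq0 Ewu; rewrite Ewu eqxx in neq_wu.
have /reach_first_step [Ewu|[z euz Hzw]] : w \in reach e (gdist e u w).-1.+1 u.
  by rewrite prednK //; apply: gdist_reach; lia.
by rewrite Ewu eqxx in neq_wu.
have dvz := max_u z euz.
have Hz : z \in reach e (gdist e v z) v by apply: gdist_reach; lia.
by have := gdist_le (reach_trans Hz Hzw); lia.
Qed.

Lemma strong_resolving_set_maximally_distant (S : {set T}) u v :
  strong_resolving_set e S -> u != v ->
  maximally_distant v u -> maximally_distant u v -> u \in S \/ v \in S.
Proof.
move=> resS neq_uv max_u max_v; have [w wS [dvw|duw]] := resS u v neq_uv.
  by left; rewrite -(geodesic_through_maximally_distant neq_uv max_u dvw).
by right; rewrite -(geodesic_through_maximally_distant _ max_v duw) // eq_sym.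
Qed.

End GraphDistance.

Lemma leq_card_pair_hitting (I T : finType) (f g : I -> T) (S : {set T}) :
  injective f -> injective g -> (forall a b, f a != g b) ->
  (forall j, f j \in S \/ g j \in S) -> #|I| <= #|S|.
Proof.
move=> inj_f inj_g neq_fg hitS.
pose h j := if f j \in S then f j else g j.
have inj_h : injective h.
  move=> a b; rewrite /h; case: ifP => _; case: ifP => _ E.
  - exact: inj_f.
  - by have := neq_fg a b; rewrite E eqxx.
  - by have := neq_fg b a; rewrite E eqxx.
  - exact: inj_g.
rewrite -(card_imset _ inj_h); apply/subset_leq_card/subsetP => _ /imsetP [j _ ->].
by rewrite /h; case: ifP => // fjNS; case: (hitS j); rewrite ?fjNS.
Qed.

Section SnDistances.
Variable k : nat.
Hypothesis k_gt0 : 0 < k.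
Local Notation n := k.*2.+1.
Local Notation V := (Sn_vertex n).
Local Notation e := (@Sn_adj n).

Lemma modS_mod a : (a %% n).+1 %% n = a.+1 %% n.
Proof. by rewrite -(add1n (a %% n)) -(add1n a) modnDmr. Qed.

(* Removes the [%% n] from a successor, so that [lia] can take over. *)
Lemma succ_mod_cases t : t < n ->
  (t.+1 < n /\ t.+1 %% n = t.+1) \/ (t.+1 = n /\ t.+1 %% n = 0).
Proof.
move=> lt_t_n; have [lt_t1_n|le_n_t1] := ltnP t.+1 n.
  by left; rewrite modn_small.
have Et : t.+1 = n by lia.
by right; rewrite Et modnn.
Qed.

Lemma Sn_adjC : symmetric e.
Proof. by move=> x y; rewrite /Sn_adj orbC. Qed.

Section Rotated.
Variable i : nat.
Hypothesis i_lt_n : i < n.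

(* Coordinates relative to index [i]: [node l t] is the vertex of layer [l]
   (0, 1, 2, 3 for a, b, c, d) with index [i + t]. *)
Definition node (l t : nat) : V := (inord l, inord ((i + t) %% n)).
Definition layer (x : V) : nat := x.1.
Definition offset (x : V) : nat := (x.2 + (n - i)) %% n.

Lemma layer_lt x : layer x < 4. Proof. exact: ltn_ord. Qed.
Lemma offset_lt x : offset x < n. Proof. exact: ltn_pmod. Qed.

Lemma node_layer l t : l < 4 -> layer (node l t) = l.
Proof. by move=> lt_l4; rewrite /layer /= inordK. Qed.

Lemma node_offset l t : offset (node l t) = t %% n.
Proof.
rewrite /offset /= inordK ?ltn_pmod // modnDml.
have -> : i + t + (n - i) = t + n by lia.
by rewrite modnDr.
Qed.

Lemma node_mod l t : node l (t %% n) = node l t.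
Proof. by rewrite /node modnDmr. Qed.

Lemma node_addn l t : node l (t + n) = node l t.
Proof. by rewrite -node_mod modnDr node_mod. Qed.

Lemma nodeE x : x = node (layer x) (offset x).
Proof.
case: x => l j; rewrite /node /layer /offset /=; congr pair; first by rewrite inord_val.
apply: val_inj; rewrite /= inordK ?ltn_pmod // modnDmr.
have -> : i + (j + (n - i)) = j + n by lia.
by rewrite modnDr modn_small.
Qed.

Lemma offset_eq x y : (val y.2 == val x.2) = (offset y == offset x).
Proof. by rewrite /offset eqn_modDr !modn_small. Qed.

Lemma offset_eqS x y : (val y.2 == (val x.2).+1 %% n) = (offset y == (offset x).+1 %% n).
Proof. by rewrite /offset modS_mod -addSn eqn_modDr (modn_small (ltn_ord y.2)). Qed.

Definition offset_arc (l t l' t' : nat) : bool :=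
  [|| (l == l') && (t' == t.+1 %% n)
    , (l == 1) && (l' == 0) && (t' == t.+1 %% n)
    , (l == 0) && (l' == 1) && (t' == t)
    , (l == 1) && (l' == 2) && (t' == t)
    | (l == 2) && (l' == 3) && (t' == t) ].

Lemma Sn_adj_offset x y :
  e x y = offset_arc (layer x) (offset x) (layer y) (offset y)
       || offset_arc (layer y) (offset y) (layer x) (offset x).
Proof. by rewrite /Sn_adj /Sn_arc /offset_arc -!offset_eqS -!offset_eq. Qed.

Lemma adj_ring l t : l < 4 -> e (node l t) (node l t.+1).
Proof.
by move=> lt_l4; rewrite Sn_adj_offset !node_layer // !node_offset /offset_arc modS_mod !eqxx.
Qed.

Lemma adj_rung l t : 0 < l < 4 -> e (node l t) (node l.-1 t).
Proof.
case: l => [|[|[|[|l]]]] // _;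
  by rewrite Sn_adj_offset !node_layer // !node_offset /offset_arc !eqxx !orbT.
Qed.

Lemma adj_cross t : e (node 1 t) (node 0 t.+1).
Proof. by rewrite Sn_adj_offset !node_layer // !node_offset /offset_arc modS_mod !eqxx !orbT. Qed.

Lemma reach_ring_fwd l t m : l < 4 -> node l (t + m) \in reach e m (node l t).
Proof.
move=> lt_l4; elim: m => [|m IHm]; first by rewrite addn0 reach_refl.
by rewrite addnS; apply: reach_step IHm (adj_ring _ lt_l4).
Qed.

Lemma reach_ring_bwd l t m : l < 4 -> node l t \in reach e m (node l (t + m)).
Proof.
move=> lt_l4; elim: m t => [|m IHm] t; first by rewrite addn0 reach_refl.
rewrite addnS -addSn -[m.+1]addn1; apply: reach_trans (IHm t.+1) _.
by apply: reach_edge; rewrite Sn_adjC adj_ring.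
Qed.

(* The distance from d_i in offset coordinates; only its 1-Lipschitz property
   is needed. *)
Definition dist_d_off (l t : nat) : nat :=
  if l == 0 then 3 + minn t.-1 (n - t) else (3 - l) + minn t (n - t).

Lemma dist_d_off_lipschitz l t l' t' : l < 4 -> l' < 4 -> t < n -> t' < n ->
  offset_arc l t l' t' ->
  dist_d_off l' t' <= (dist_d_off l t).+1 /\ dist_d_off l t <= (dist_d_off l' t').+1.
Proof.
move=> lt_l4 lt_l'4 lt_tn lt_t'n; rewrite /offset_arc /dist_d_off.
move: (succ_mod_cases lt_tn); move: (t.+1 %% n) => s.
by case: l lt_l4 => [|l] ? ; case: l' lt_l'4 => [|l'] ? /=; lia.
Qed.

Definition dist_d (x : V) : nat := dist_d_off (layer x) (offset x).

Lemma dist_d_lipschitz x y : e x y -> dist_d y <= (dist_d x).+1 /\ dist_d x <= (dist_d y).+1.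
Proof.
have lip := dist_d_off_lipschitz (layer_lt _) (layer_lt _) (offset_lt _) (offset_lt _).
by rewrite Sn_adj_offset => /orP [/lip|/lip []].
Qed.

Definition center : V := node 3 0.
Definition antipode : V := node 0 (k + 1).

Lemma dist_d_center : dist_d center = 0.
Proof. by rewrite /dist_d /center node_layer // node_offset mod0n. Qed.

Lemma dist_d_antipode : dist_d antipode = k + 3.
Proof. by rewrite /dist_d /antipode node_layer // node_offset modn_small /dist_d_off /=; lia. Qed.

Lemma card_Sn_vertex : #|{: V}| = 4 * n.
Proof. by rewrite card_prod !card_ord. Qed.

Lemma gdist_center_antipode : k + 3 <= gdist e center antipode.
Proof.
have := @gdist_ge_lipschitz _ e dist_d center antipode
  (fun x y exy => proj1 (dist_d_lipschitz exy)).
by rewrite card_Sn_vertex dist_d_center dist_d_antipode subn0; apply; lia.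
Qed.

Lemma gdist_antipode_center : k + 3 <= gdist e antipode center.
Proof.
have lip x y : e x y -> k + 3 - dist_d y <= (k + 3 - dist_d x).+1.
  by move/dist_d_lipschitz; lia.
have := @gdist_ge_lipschitz _ e _ antipode center lip.
by rewrite card_Sn_vertex dist_d_center dist_d_antipode subn0 subnn subn0; apply; lia.
Qed.

Lemma antipode_neighbors y : e antipode y ->
  [\/ y = node 0 (k + 2), y = node 0 k, y = node 1 (k + 1) | y = node 1 k].
Proof.
have lt_k1_n : k + 1 < n by lia.
rewrite Sn_adj_offset /antipode node_layer // node_offset modn_small // => Hy.
rewrite (nodeE y) -(node_mod 0 (k + 2)) (_ : k + 2 = (k + 1).+1); last by lia.
move: Hy (layer_lt y) (offset_lt y); move: (layer y) (offset y) => l t.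
rewrite /offset_arc => Hy lt_l4 lt_tn.
move: (succ_mod_cases lt_tn) (succ_mod_cases lt_k1_n) Hy.
move: (t.+1 %% n) ((k + 1).+1 %% n) => s s' Es Es' Hy.
have : [|| (l == 0) && (t == s'), (l == 0) && (t == k), (l == 1) && (t == k + 1)
         | (l == 1) && (t == k)] by lia.
by case/or4P=> /andP [/eqP -> /eqP ->]; [apply: Or41|apply: Or42|apply: Or43|apply: Or44].
Qed.

Lemma center_neighbors y : e center y ->
  [\/ y = node 3 1, y = node 3 k.*2 | y = node 2 0].
Proof.
have lt_0_n : 0 < n by [].
rewrite Sn_adj_offset /center node_layer // node_offset mod0n => Hy.
rewrite (nodeE y); move: Hy (layer_lt y) (offset_lt y); move: (layer y) (offset y) => l t.
rewrite /offset_arc => Hy lt_l4 lt_tn.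
move: (succ_mod_cases lt_tn) (succ_mod_cases lt_0_n) Hy.
move: (t.+1 %% n) (0.+1 %% n) => s s' Es Es' Hy.
have : [|| (l == 3) && (t == 1), (l == 3) && (t == k.*2) | (l == 2) && (t == 0)] by lia.
by case/or3P=> /andP [/eqP -> /eqP ->]; [apply: Or31|apply: Or32|apply: Or33].
Qed.

Lemma antipode_maximally_distant : maximally_distant e center antipode.
Proof.
move=> y /antipode_neighbors Hy; apply: leq_trans gdist_center_antipode.
have center_b t : node 1 t \in reach e (2 + t) center.
  have center_b0 := reach_step (reach_edge (@adj_rung 3 0 isT)) (@adj_rung 2 0 isT).
  by rewrite -[t]add0n; apply: reach_trans center_b0 (reach_ring_fwd _ _ _).
case: Hy => ->.
- have d_ring : node 3 (k + 1) \in reach e k center.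
    have -> : center = node 3 (k + 1 + k) by rewrite /center -(node_addn 3 0); congr node; lia.
    exact: reach_ring_bwd.
  have := reach_step (reach_step (reach_step d_ring (@adj_rung 3 _ isT))
                                 (@adj_rung 2 _ isT)) (adj_cross _).
  have -> : (k + 1).+1 = k + 2 by lia.
  by move/gdist_le; lia.
- have := reach_step (center_b (k - 1)) (adj_cross _).
  have -> : (k - 1).+1 = k by lia.
  by move/gdist_le; lia.
- by have /gdist_le := center_b (k + 1); lia.
- by have /gdist_le := center_b k; lia.
Qed.

Lemma center_maximally_distant : maximally_distant e antipode center.
Proof.
move=> y /center_neighbors Hy; apply: leq_trans gdist_antipode_center.
have antipode_c : node 2 (k + 1) \in reach e 2 antipode.
  apply: reach_step (reach_edge _) _; rewrite Sn_adjC.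
  - exact: (@adj_rung 1 _ isT).
  - exact: (@adj_rung 2 _ isT).
have antipode_d : node 3 (k + 1) \in reach e 3 antipode.
  by apply: reach_step antipode_c _; rewrite Sn_adjC (@adj_rung 3 _ isT).
case: Hy => ->.
- have := reach_ring_bwd 1 k (isT : 3 < 4); rewrite addnC.
  by move=> /(reach_trans antipode_d) /gdist_le; lia.
- have := reach_trans antipode_d (reach_ring_fwd (k + 1) (k - 1) (isT : 3 < 4)).
  have -> : k + 1 + (k - 1) = k.*2 by lia.
  by move/gdist_le; lia.
- have := reach_trans antipode_c (reach_ring_fwd (k + 1) k (isT : 2 < 4)).
  have -> : k + 1 + k = 0 + n by lia.
  by rewrite node_addn => /gdist_le; lia.
Qed.

Lemma center_or_antipode_in (S : {set V}) :
  strong_resolving_set e S -> center \in S \/ antipode \in S.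
Proof.
move=> resS; have neq_ca : center != antipode.
  by apply/negP => /eqP /(congr1 layer); rewrite !node_layer.
exact: strong_resolving_set_maximally_distant resS neq_ca
         center_maximally_distant antipode_maximally_distant.
Qed.
End Rotated.

Lemma center_inj : injective (fun j : 'I_n => center j).
Proof.
move=> a b /(congr1 (fun x : V => val x.2)) /=.
by rewrite !inordK ?ltn_pmod // !addn0 !modn_small // => /val_inj.
Qed.

Lemma antipode_inj : injective (fun j : 'I_n => antipode j).
Proof.
move=> a b /(congr1 (fun x : V => val x.2)) /=.
by rewrite !inordK ?ltn_pmod // => /eqP; rewrite eqn_modDr !modn_small // => /eqP /val_inj.
Qed.

Lemma center_neq_antipode j j' : center j != antipode j'.
Proof. by apply/negP => /eqP /(congr1 layer); rewrite !node_layer. Qed.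
End SnDistances.

Theorem lemma3p9 (k : nat) (hk : 1 <= k) (S : {set Sn_vertex k.*2.+1}) :
  strong_resolving_set (@Sn_adj k.*2.+1) S -> k.*2.+1 <= #|S|.
Proof.
move=> resS; rewrite -[X in X <= _]card_ord.
apply: (leq_card_pair_hitting (@center_inj k) (@antipode_inj k) (@center_neq_antipode k)).
by move=> j; exact: (center_or_antipode_in hk (ltn_ord j) resS).
Qed.
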